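(* Let $\varphi$ be a $\mathcal{COD}[\sigma]$-formula, let $\mathbf d=\langle[{=}(X_1),k_1],\dots,[{=}(X_n),k_n]\rangle$ be a sequence of occurrences of constancy atoms in $\varphi$, and let $F$ be the set of all instantiating functions over $\mathbf d$. Then $\varphi\equiv\bigsqcup_{f\in F}\varphi_f$ (both over causal teams, $\equiv^c$, and over generalized causal teams, $\equiv^g$).
   Context: A signature $\sigma=(\mathrm{Dom},\mathrm{Ran})$: $\mathrm{Dom}$ nonempty finite set of variables, each with nonempty finite range $\mathrm{Ran}(X)$; $\mathbf X=\mathbf x$ abbreviates $X_1=x_1\wedge\dots\wedge X_n=x_n$ ($\mathbf x\in\prod\mathrm{Ran}(X_i)$), inconsistent if it contains $X=x,X=x'$ with $x\ne x'$. $\mathcal{CO}[\sigma]$: $\alpha::=X=x\mid\neg\alpha\mid\alpha\wedge\alpha\mid\alpha\vee\alpha\mid\mathbf X=\mathbf x\;\Box\!\!\rightarrow\alpha$. $\mathcal{COD}[\sigma]$: $\varphi::=X=x\mid{=}(\mathbf X;Y)\mid\neg\alpha\mid\varphi\wedge\varphi\mid\varphi\vee\varphi\mid\mathbf X=\mathbf x\;\Box\!\!\rightarrow\varphi$ ($\alpha\in\mathcal{CO}[\sigma]$); ${=}(Y)$ denotes ${=}(\mathbf X;Y)$ with empty $\mathbf X$ (constancy atom). $\sqcup$ is the global disjunction: $T\models\varphi\sqcup\psi$ iff $T\models\varphi$ or $T\models\psi$. Systems of functions $\mathcal F$: for each $V\in\mathrm{En}(\mathcal F)\subseteq\mathrm{Dom}$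 parents $PA^{\mathcal F}_V\subseteq\mathrm{Dom}\setminus\{V\}$ and $\mathcal F_V:\mathrm{Ran}(PA^{\mathcal F}_V)\to\mathrm{Ran}(V)$; $\mathrm{Ex}(\mathcal F)=\mathrm{Dom}\setminus\mathrm{En}(\mathcal F)$; only recursive (acyclic parent graph). An assignment $s$ is compatible with $\mathcal F$ if $s(V)=\mathcal F_V(s(PA^{\mathcal F}_V))$ for $V\in\mathrm{En}(\mathcal F)$. For consistent $\mathbf X=\mathbf x$: $\mathcal F_{\mathbf X=\mathbf x}$ restricts $\mathcal F$ to $\mathrm{En}(\mathcal F)\setminus\mathbf X$; $s^{\mathcal F}_{\mathbf X=\mathbf x}$: $X_i\mapsto x_i$, $V\mapsto s(V)$ on $\mathrm{Ex}(\mathcal F)\setminus\mathbf X$, $V\mapsto\mathcal F_V(s^{\mathcal F}_{\mathbf X=\mathbf x}(PA^{\mathcal F}_V))$ on $\mathrm{En}(\mathcal F)\setminus\mathbf X$. Causal team $T=(T^-,\mathcal F)$ ($T^-$ compatible assignments; empty team components identified as $\emptyset$); causal subteams $(S^-,\mathcal F)$, $S^-\subseteq T^-$; $T_{\mathbf X=\mathbf x}=(\{s^{\mathcal F}_{\mathbf X=\mathbf x}:s\in T^-\},\mathcal F_{\mathbf X=\mathbf x})$; $\models^c$: $T\models X=x$ iff $s(X)=x$ for all $s\in T^-$; $T\models{=}(\mathbf X;Y)$ iff for all $s,s'\in T^-$, $s(\mathbf X)=s'(\mathbf X)$ implies $s(Y)=s'(Y)$; $T\models\neg\alpha$ iff $(\{s\},\mathcal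 F)\not\models\alpha$ for all $s\in T^-$; $\wedge$ classical; $T\models\varphi\vee\psi$ iff causal subteams $T_1,T_2$ exist with $T_1^-\cup T_2^-=T^-$, $T_1\models\varphi$, $T_2\models\psi$; $T\models\mathbf X=\mathbf x\;\Box\!\!\rightarrow\varphi$ iff $\mathbf X=\mathbf x$ inconsistent or $T_{\mathbf X=\mathbf x}\models\varphi$. Generalized causal team: a set $T$ of compatible pairs $(s,\mathcal F)$; $T^-=\{s:(s,\mathcal F)\in T\}$; $T_{\mathbf X=\mathbf x}=\{(s^{\mathcal F}_{\mathbf X=\mathbf x},\mathcal F_{\mathbf X=\mathbf x}):(s,\mathcal F)\in T\}$; $\models^g$: same clauses except $T\models\neg\alpha$ iff $\{(s,\mathcal F)\}\not\models\alpha$ for all $(s,\mathcal F)\in T$, and $T\models\varphi\vee\psi$ iff $T=T_1\cup T_2$ with $T_1\models\varphi$, $T_2\models\psi$. $\equiv^c$ / $\equiv^g$: satisfied by the same causal / generalized causal teams. $[{=}(X_i),k_i]$ denotes the $k_i$-th occurrence of the subformula ${=}(X_i)$ in $\varphi$ (the listed occurrences are distinct). An instantiating function over $\mathbf d$ is a function $f:\{1,\dots,n\}\to\bigcup_i\mathrm{Ran}(X_i)$ with $f(i)\in\mathrm{Ran}(X_i)$ for each $i$; $\varphi_f$ is the formula obtained from $\varphi$ by replacing, for each $i$, the occurrence $[{=}(X_i),k_i]$ by $X_i=f(i)$. *)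

From mathcomp Require Import all_boot.
Set Implicit Arguments.
Unset Strict Implicit.
Unset Printing Implicit Defensive.

Section CausalTeams.
(* A signature sigma = (Dom, Ran): a finite set of variables, each with a
   finite range. Nonemptiness is assumed as hypotheses in the theorem. *)
Context {Dom : finType} (Ran : Dom -> finType).

Definition assign := forall X : Dom, Ran X.

(* an atom X = x of an antecedent  X1 = x1 /\ ... /\ Xn = xn *)
Definition lit := {X : Dom & Ran X}.

(* Formulas.  CO and COD formulas are carved out by the predicates isCO /
   isCOD below.  FDep Xs Y is the dependence atom =(Xs;Y); the constancy atom
   =(Y) is FDep [::] Y. *)
Inductive form : Type :=
| FEq  : forall X : Dom, Ran X -> form
| FDep : seq Dom -> Dom -> form
| FNeg : form -> form
| FAnd : form -> form -> form
| FOr  : form -> form -> form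
| FCf  : seq lit -> form -> form.

Fixpoint isCO (a : form) : Prop :=
  match a with
  | FEq _ _ => True
  | FDep _ _ => False
  | FNeg b => isCO b
  | FAnd b c | FOr b c => isCO b /\ isCO c
  | FCf _ b => isCO b
  end.

Fixpoint isCOD (a : form) : Prop :=
  match a with
  | FEq _ _ | FDep _ _ => True
  | FNeg b => isCO b
  | FAnd b c | FOr b c => isCOD b /\ isCOD c
  | FCf _ b => isCOD b
  end.

(* Systems of functions.  fn V is F_V, given as a function of a whole
   assignment that only depends on the parents PA V (see wf_system). *)
Record system := Sys {
  En : {set Dom};
  PA : Dom -> {set Dom};
  fn : forall V : Dom, assign -> Ran V }.

Definition wf_system (F : system) : Prop :=
  (forall V, V \in En F -> V \notin PA F V) /\
  (forall V, V \in En F -> forall s s' : assign,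
      (forall W, W \in PA F V -> s W = s' W) -> fn F V s = fn F V s') /\
  (* recursive: the parent graph is acyclic (admits a strict ranking) *)
  (exists rank : Dom -> nat,
      forall V W, V \in En F -> W \in PA F V -> rank W < rank V).

Definition compatible (s : assign) (F : system) : Prop :=
  forall V, V \in En F -> s V = fn F V s.

Definition in_ante (ante : seq lit) (V : Dom) : bool :=
  has (fun p : lit => tag p == V) ante.

Definition consistent (ante : seq lit) : Prop :=
  forall p q : lit, p \in ante -> q \in ante -> tag p = tag q -> p = q.

Definition restrict (F : system) (ante : seq lit) : system :=
  Sys (En F :\: [set V | in_ante ante V]) (PA F) (fn F).

(* t = s^F_{X=x} (unique for recursive F and consistent X=x) *)
Definition interv (F : system) (ante : seq lit) (s t : assign) : Prop :=
  (forall p, p \in ante -> t (tag p) = tagged p) /\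
  (forall V, ~~ in_ante ante V -> V \notin En F -> t V = s V) /\
  (forall V, ~~ in_ante ante V -> V \in En F -> t V = fn F V t).

(* Causal team semantics |=^c ; a causal team is (T^-, F) *)
Fixpoint sat_c (F : system) (T : assign -> Prop) (a : form) : Prop :=
  match a with
  | FEq X x => forall s, T s -> s X = x
  | FDep Xs Y => forall s s', T s -> T s' ->
       (forall X, X \in Xs -> s X = s' X) -> s Y = s' Y
  | FNeg b => forall s, T s -> ~ sat_c F (fun t => t = s) b
  | FAnd b c => sat_c F T b /\ sat_c F T c
  | FOr b c => exists T1 T2 : assign -> Prop,
       (forall s, T s <-> T1 s \/ T2 s) /\ sat_c F T1 b /\ sat_c F T2 c
  | FCf ante b => ~ consistent ante \/
       sat_c (restrict F ante) (fun t => exists s, T s /\ interv F ante s t) b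
  end.

Definition causal_team (F : system) (T : assign -> Prop) : Prop :=
  wf_system F /\ forall s, T s -> compatible s F.

Fixpoint sat_g (T : assign * system -> Prop) (a : form) : Prop :=
  match a with
  | FEq X x => forall p, T p -> p.1 X = x
  | FDep Xs Y => forall p p', T p -> T p' ->
       (forall X, X \in Xs -> p.1 X = p'.1 X) -> p.1 Y = p'.1 Y
  | FNeg b => forall p, T p -> ~ sat_g (fun q => q = p) b
  | FAnd b c => sat_g T b /\ sat_g T c
  | FOr b c => exists T1 T2 : assign * system -> Prop,
       (forall p, T p <-> T1 p \/ T2 p) /\ sat_g T1 b /\ sat_g T2 c
  | FCf ante b => ~ consistent ante \/
       sat_g (fun q => exists p, T p /\ q.2 = restrict p.2 ante /\
                                 interv p.2 ante p.1 q.1) b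
  end.

Definition gen_team (T : assign * system -> Prop) : Prop :=
  forall p, T p -> wf_system p.2 /\ compatible p.1 p.2.

(* Occurrences of constancy atoms =(Y) are numbered, per variable Y,
   1, 2, ... in left-to-right (preorder) order. *)
Fixpoint count_const (a : form) (Y : Dom) : nat :=
  match a with
  | FEq _ _ => 0
  | FDep Xs Z => if (Xs == [::]) && (Z == Y) then 1 else 0
  | FNeg b => count_const b Y
  | FAnd b c | FOr b c => count_const b Y + count_const c Y
  | FCf _ b => count_const b Y
  end.

(* phi_f: replace, for each i, the k_i-th occurrence of =(X_i) by X_i = f(i).
   The counter c records how many occurrences of each =(Y) were passed. *)
Section Inst.
Variables (n : nat) (X : 'I_n -> Dom) (k : 'I_n -> nat)
          (f : forall i : 'I_n, Ran (X i)).

Fixpoint inst_aux (c : Dom -> nat) (a : form) : form * (Dom -> nat) :=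
  match a with
  | FEq Z z => (FEq z, c)
  | FDep Xs Y =>
      if Xs == [::] then
        let c' := fun V => if V == Y then (c Y).+1 else c V in
        match [pick i | (X i == Y) && (k i == (c Y).+1)] with
        | Some i => (FEq (f i), c')
        | None => (FDep [::] Y, c')
        end
      else (FDep Xs Y, c)
  | FNeg b => let (b', c1) := inst_aux c b in (FNeg b', c1)
  | FAnd b d => let (b', c1) := inst_aux c b in
                let (d', c2) := inst_aux c1 d in (FAnd b' d', c2)
  | FOr b d => let (b', c1) := inst_aux c b in
               let (d', c2) := inst_aux c1 d in (FOr b' d', c2)
  | FCf ante b => let (b', c1) := inst_aux c b in (FCf ante b', c1)
  end.

Definition inst (a : form) : form := (inst_aux (fun _ => 0) a).1.
End Inst.

End CausalTeams.

Arguments inst {Dom Ran n} X k f a.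

From mathcomp Require Import all_boot zify.
From Stdlib Require Import FunctionalExtensionality Classical.
Set Implicit Arguments.
Unset Strict Implicit.
Unset Printing Implicit Defensive.

(* Replacing a constancy atom =(Y) by Y = y only strengthens it, and in a COD
   formula such atoms never occur under a negation, so every phi_f entails phi.
   Conversely, if T satisfies phi, each occurrence of =(Y) is evaluated on some
   subteam on which Y is constant; instantiating it by that constant (by
   anything if the subteam is empty) preserves satisfaction.  Causal teams
   reduce to generalized ones: (T, F) behaves as the team {(s, F) | s in T}. *)

Section CausalAsGeneralized.
Context {Dom : finType} {Ran : Dom -> finType}.
Implicit Types (F : system Ran) (T : assign Ran -> Prop)
  (G : assign Ran * system Ran -> Prop).

Lemma pair_eq_uniform (s : assign Ran) F (q : assign Ran * system Ran) :
  q = (s, F) <-> q.1 = s /\ q.2 = F.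
Proof. by case: q => t F'; split=> [[-> ->] | [/= -> ->]]. Qed.

Lemma sub_uniform_team T F G G1 :
    (forall p, G p <-> T p.1 /\ p.2 = F) -> (forall p, G1 p -> G p) ->
  forall p, G1 p <-> G1 (p.1, F) /\ p.2 = F.
Proof.
move=> HG subG1 [s F'] /=; split=> [G1p | [G1p ->]] //.
by have [_ /= EF] := proj1 (HG _) (subG1 _ G1p); rewrite -EF.
Qed.

Lemma sat_c_as_g (a : form Ran) F T G :
  (forall p, G p <-> T p.1 /\ p.2 = F) -> (sat_c F T a <-> sat_g G a).
Proof.
elim: a F T G => [Y y|Xs Y|b IH|b IHb d IHd|b IHb d IHd|ante b IH] F T G HG /=.
- split=> [H p /HG[Tp _] | H s Ts]; first exact: H.
  by apply: (H (s, F)); apply/HG.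
- split=> [H p p' /HG[Tp _] /HG[Tp' _] | H s s' Ts Ts']; first exact: H.
  by apply: (H (s, F) (s', F)); apply/HG.
- split=> [H [s F'] /HG[/= Ts ->] | H s Ts].
  + by move/(IH F (fun t => t = s) _ (pair_eq_uniform s F)); apply: H.
  + by move/(IH F (fun t => t = s) _ (pair_eq_uniform s F)); apply: H; apply/HG.
- by rewrite (IHb F T G HG) (IHd F T G HG).
- split=> [[T1 [T2 [HT [Hb Hd]]]] | [G1 [G2 [HG12 [Hb Hd]]]]].
  + exists (fun p => T1 p.1 /\ p.2 = F), (fun p => T2 p.1 /\ p.2 = F).
    split; last by split; [apply/(IHb F T1) | apply/(IHd F T2)].
    by move=> p; have := HG p; have := HT p.1; tauto.
  + exists (fun s => G1 (s, F)), (fun s => G2 (s, F)).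
    have HG1 := sub_uniform_team HG (fun p G1p => proj2 (HG12 p) (or_introl G1p)).
    have HG2 := sub_uniform_team HG (fun p G2p => proj2 (HG12 p) (or_intror G2p)).
    split; last by split; [apply/(IHb F _ G1) | apply/(IHd F _ G2)].
    by move=> s; have := HG (s, F); have := HG12 (s, F); move=> /=; intuition.
- set T' := fun t => exists s, T s /\ interv F ante s t.
  set G' := fun q => exists p, G p /\ q.2 = restrict p.2 ante /\ interv p.2 ante p.1 q.1.
  suff HG' : forall q, G' q <-> T' q.1 /\ q.2 = restrict F ante.
    by rewrite (IH _ _ _ HG').
  move=> [t F'']; split=> [[[s F'] [/HG[/= Ts ->] [/= -> Hq]]] | [[s [Ts Hq]] /= ->]].
  + by split=> //; exists s.
  + by exists (s, F); split; [apply/HG | split].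
Qed.

End CausalAsGeneralized.

Section Instantiation.
Context {Dom : finType} {Ran : Dom -> finType}.
Variables (n : nat) (X : 'I_n -> Dom) (k : 'I_n -> nat).
Implicit Types (f g : forall i : 'I_n, Ran (X i)) (c : Dom -> nat) (a b d : form Ran)
  (T : assign Ran * system Ran -> Prop).

Definition pass c a : Dom -> nat := fun V => c V + count_const a V.

(* [window c a i]: the occurrence [k i] of =(X i) lies in [a], when [c Y]
   occurrences of each =(Y) precede [a]. *)
Definition window c a (i : 'I_n) : bool :=
  c (X i) < k i <= c (X i) + count_const a (X i).

Lemma inst_aux_counter f c a : (inst_aux k f c a).2 = pass c a.
Proof.
rewrite /pass; elim: a c => [Y y|Xs Y|b IH|b IHb d IHd|b IHb d IHd|ante b IH] c /=.
- by apply: functional_extensionality => V; rewrite addn0.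
- case: eqP => _ /=; apply: functional_extensionality => V; last by rewrite addn0.
  by case: [pick i | _]; rewrite /= eq_sym; case: eqP => [->|_]; rewrite ?addn1 ?addn0.
- by move: (IH c); case: inst_aux.
- move: (IHb c); case: inst_aux => b' c1 /= ->; move: (IHd (pass c b)).
  by case: inst_aux => d' c2 /= ->; apply: functional_extensionality => V; rewrite addnA.
- move: (IHb c); case: inst_aux => b' c1 /= ->; move: (IHd (pass c b)).
  by case: inst_aux => d' c2 /= ->; apply: functional_extensionality => V; rewrite addnA.
- by move: (IH c); case: inst_aux.
Qed.

Lemma inst_aux_neg f c b : (inst_aux k f c (FNeg b)).1 = FNeg (inst_aux k f c b).1.
Proof. by rewrite /=; case: inst_aux. Qed.

Lemma inst_aux_and f c b d : (inst_aux k f c (FAnd b d)).1 =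
  FAnd (inst_aux k f c b).1 (inst_aux k f (pass c b) d).1.
Proof. by rewrite /= -(inst_aux_counter f c b); case: inst_aux => b' c1; case: inst_aux. Qed.

Lemma inst_aux_or f c b d : (inst_aux k f c (FOr b d)).1 =
  FOr (inst_aux k f c b).1 (inst_aux k f (pass c b) d).1.
Proof. by rewrite /= -(inst_aux_counter f c b); case: inst_aux => b' c1; case: inst_aux. Qed.

Lemma inst_aux_cf f c ante b :
  (inst_aux k f c (FCf ante b)).1 = FCf ante (inst_aux k f c b).1.
Proof. by rewrite /=; case: inst_aux. Qed.

Lemma inst_aux_const f c Y : (inst_aux k f c (FDep Ran [::] Y)).1 =
  if [pick i | (X i == Y) && (k i == (c Y).+1)] is Some i then FEq (f i)
  else FDep Ran [::] Y.
Proof. by rewrite /=; case: [pick i | _]. Qed.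

Lemma inst_aux_CO f c a : isCO a -> (inst_aux k f c a).1 = a.
Proof.
elim: a c => [Y y|Xs Y|b IH|b IHb d IHd|b IHb d IHd|ante b IH] c //=.
- by move=> COb; rewrite -[in RHS](IH c COb); case: inst_aux.
- by move=> [COb COd]; have := inst_aux_and f c b d; rewrite /= IHb ?IHd.
- by move=> [COb COd]; have := inst_aux_or f c b d; rewrite /= IHb ?IHd.
- by move=> COb; rewrite -[in RHS](IH c COb); case: inst_aux.
Qed.

Lemma sat_g_inst_aux f c a T : isCOD a -> sat_g T (inst_aux k f c a).1 -> sat_g T a.
Proof.
elim: a c T => [Y y|Xs Y|b IH|b IHb d IHd|b IHb d IHd|ante b IH] c T //=.
- move=> _; case: (Xs =P [::]) => [-> | _] //=.
  case: pickP => [i /andP[/eqP <- _] | _] //= Hconst p p' Tp Tp' _.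
  by rewrite (Hconst p Tp) (Hconst p' Tp').
- by move=> COb; rewrite inst_aux_neg inst_aux_CO.
- move=> [CODb CODd]; rewrite inst_aux_and /= => -[Hb Hd].
  by split; [apply: (IHb c) | apply: (IHd (pass c b))].
- move=> [CODb CODd]; rewrite inst_aux_or /= => -[T1 [T2 [HT [Hb Hd]]]].
  by exists T1, T2; split=> //; split; [apply: (IHb c) | apply: (IHd (pass c b))].
- move=> CODb; rewrite inst_aux_cf /= => -[Hinc | Hb]; [by left | right].
  exact: (IH c).
Qed.

Lemma window_merge c b d f1 f2 g :
    (forall i, c (X i) < k i <= c (X i) + (count_const b (X i) + count_const d (X i)) ->
       g i = (if window c b i then f1 i else f2 i)) ->
  (forall i, window c b i -> g i = f1 i) /\ (forall i, window (pass c b) d i -> g i = f2 i).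
Proof.
move=> Hg; split=> i Hi; rewrite Hg; move: Hi; rewrite /window /pass.
- by move=> ->.
- by lia.
- by case: ifP => // Hb Hi; exfalso; lia.
- by lia.
Qed.

Variable f0 : forall i : 'I_n, Ran (X i).

(* Only the values of [f] on the window matter; this is what lets the choices
   made for the two sides of a connective be merged. *)
Lemma exists_sat_g_inst_aux c a T : isCOD a -> sat_g T a ->
  exists f, forall g, (forall i, window c a i -> g i = f i) -> sat_g T (inst_aux k g c a).1.
Proof.
elim: a c T => [Y y|Xs Y|b IH|b IHb d IHd|b IHb d IHd|ante b IH] c T.
- by move=> _ Hy; exists f0.
- move=> _ Hdep; case: (Xs =P [::]) Hdep => [-> | /eqP Xs_nil] Hdep; last first.
    by exists f0 => g _ /=; rewrite (negbTE Xs_nil).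
  case: (classic (exists p, T p)) => [[p0 Tp0] | Tempty]; last first.
    by exists f0 => g _; rewrite inst_aux_const; case: pick => [i|] /= p *; case: Tempty; exists p.
  exists (fun i => p0.1 (X i)) => g Hg; rewrite inst_aux_const.
  case: pickP => [i /andP[/eqP XiY /eqP kiS] | _]; last exact: Hdep.
  move=> p Tp /=; rewrite Hg ?XiY; last by rewrite /window XiY kiS /= eqxx addn1 ltnSn.
  by apply: Hdep.
- by move=> COb HTb; exists f0 => g _; rewrite inst_aux_neg inst_aux_CO.
- move=> [CODb CODd] [Hb Hd].
  have [f1 Hf1] := IHb c T CODb Hb; have [f2 Hf2] := IHd (pass c b) T CODd Hd.
  exists (fun i => if window c b i then f1 i else f2 i) => g /window_merge[g1 g2].
  by rewrite inst_aux_and; split; [apply: Hf1 | apply: Hf2].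
- move=> [CODb CODd] [T1 [T2 [HT [Hb Hd]]]].
  have [f1 Hf1] := IHb c T1 CODb Hb; have [f2 Hf2] := IHd (pass c b) T2 CODd Hd.
  exists (fun i => if window c b i then f1 i else f2 i) => g /window_merge[g1 g2].
  by rewrite inst_aux_or; exists T1, T2; split=> //; split; [apply: Hf1 | apply: Hf2].
- move=> CODb [Hinc | Hb]; first by exists f0 => g _; rewrite inst_aux_cf; left.
  have [f Hf] := IH c _ CODb Hb.
  by exists f => g Hg; rewrite inst_aux_cf; right; apply: Hf.
Qed.

End Instantiation.

Theorem lemma5p15 (Dom : finType) (Ran : Dom -> finType)
  (HDom : 0 < #|Dom|) (HRan : forall Y : Dom, 0 < #|Ran Y|)
  (phi : form Ran) (Hphi : isCOD phi)
  (n : nat) (X : 'I_n -> Dom) (k : 'I_n -> nat)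
  (Hocc : forall i : 'I_n, 0 < k i <= count_const phi (X i))
  (Hdist : forall i j : 'I_n, X i = X j -> k i = k j -> i = j) :
  (forall (F : system Ran) (T : assign Ran -> Prop), causal_team F T ->
     (sat_c F T phi <->
      exists f : (forall i : 'I_n, Ran (X i)), sat_c F T (inst X k f phi)))
  /\
  (forall T : assign Ran * system Ran -> Prop, gen_team T ->
     (sat_g T phi <->
      exists f : (forall i : 'I_n, Ran (X i)), sat_g T (inst X k f phi))).
Proof.
(* [HDom], [Hocc], [Hdist] and the well-formedness of the teams are not needed:
   an index naming no occurrence is ignored by [inst], and of several indices
   naming the same occurrence [inst] uses the picked one. *)
pose f0 i : Ran (X i) := enum_val (Ordinal (HRan (X i))).
have sat_g_inst T : sat_g T phi <-> exists f, sat_g T (inst X k f phi).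
  split=> [Hphi_T | [f]]; last exact: sat_g_inst_aux.
  have [f Hf] := exists_sat_g_inst_aux k f0 (fun _ => 0) Hphi Hphi_T.
  by exists f; apply: Hf.
split=> [F T _ | T _]; last exact: sat_g_inst.
have embed a : sat_c F T a <-> sat_g (fun p => T p.1 /\ p.2 = F) a.
  exact: sat_c_as_g.
by rewrite embed sat_g_inst; split=> -[f /embed]; exists f.
Qed.
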